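(* Let $a_1\ge1$ be an integer and $n \ge 4$ an even integer. Suppose that $p$ is a high primitive divisor of $\ell_n$ such that $(D \mid p) = -1$, and put $v := \nu_p(\ell_n)$. Then there exists $\bm{x} \in \mathcal{L}(f)$ such that $\tau(\bm{x}; p^v) = 2n$, $x_s \not\equiv x_t \pmod{p^v}$ for all integers $s,t$ with $0 < s < t < 2n$ and $s \equiv t \pmod 2$, and $x_j \not\equiv 0 \pmod{p^v}$ for all $j \ge 0$.
   Context: Let $f := X^2 - a_1X - 1$, $D := a_1^2+4$, and $\alpha,\beta$ the roots of $f$ ($\alpha\beta=-1$, $\alpha+\beta=a_1$). $\mathcal{L}(f)$ is the set of integer sequences $\bm{x}=(x_n)_{n\ge0}$ with $x_{n+2} = a_1x_{n+1} + x_n$ for all $n\ge0$. For an integer $m\ge1$, $\tau(\bm{x}; m)$ is the minimal integer $t \ge 1$ with $x_{n+t}\equiv x_n \pmod m$ for all sufficiently large $n$. The Lehmer sequence is $\ell_n := \frac{\alpha^n - (-\beta)^n}{\alpha + \beta}$ for odd $n$ and $\ell_n := \frac{\alpha^n - (-\beta)^n}{\alpha^2 - \beta^2}$ for even $n$ (integers). A prime $p$ is a primitive divisor of $\ell_n$ if $p \mid \ell_n$ but $p \nmid (\alpha^2-\beta^2)^2\ell_1\cdots\ell_{n-1}$, where $(\alpha^2-\beta^2)^2 = a_1^2D$; it is a high primitive divisor if it is an odd primitive divisor with $p^{\nu_p(\ell_n)} > n$, $\nu_p$ being the $p$-adic valuation. $(D\mid p)$ is the Legendre symbol. *)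

From mathcomp Require Import all_boot all_order all_algebra all_field.
Set Implicit Arguments. Unset Strict Implicit. Unset Printing Implicit Defensive.
Import Order.TTheory GRing.Theory Num.Theory.
Local Open Scope ring_scope.

Definition discr (a1 : nat) : nat := (a1 ^ 2 + 4)%N.

(* The two roots of X^2 - a1 X - 1 in algC *)
Definition alpha (a1 : nat) : algC := (a1%:R + sqrtC (discr a1)%:R) / 2.
Definition beta (a1 : nat) : algC := (a1%:R - sqrtC (discr a1)%:R) / 2.

Definition lehmerC (a1 n : nat) : algC :=
  let a := alpha a1 in let b := beta a1 in
  if odd n then (a ^+ n - (- b) ^+ n) / (a + b)
  else (a ^+ n - (- b) ^+ n) / (a ^+ 2 - b ^+ 2).

(* lehmerC a1 n is an integer; ell a1 n is that integer. *)
Definition ell (a1 n : nat) : int := Num.floor (lehmerC a1 n).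

Definition nu (p : nat) (z : int) : nat := logn p `|z|%N.

(* primitive divisor of ell_n:  p | ell_n, p does not divide
   (alpha^2-beta^2)^2 * ell_1 ... ell_{n-1}, with (alpha^2-beta^2)^2 = a1^2 D *)
Definition primitive_divisor (a1 n p : nat) : Prop :=
  prime p /\ (p%:Z %| ell a1 n)%Z /\
  ~~ (p%:Z %| (a1 ^ 2 * discr a1)%:Z * \prod_(1 <= i < n) ell a1 i)%Z.

Definition high_primitive_divisor (a1 n p : nat) : Prop :=
  primitive_divisor a1 n p /\ odd p /\ (n < p ^ nu p (ell a1 n))%N.

Definition legendre (d : int) (p : nat) : int :=
  if (p%:Z %| d)%Z then 0
  else if [exists y : 'I_p, ((y%:Z) ^+ 2 == d %[mod p%:Z])%Z] then 1 else -1.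

Definition in_L (a1 : nat) (x : nat -> int) : Prop :=
  forall k : nat, x k.+2 = a1%:Z * x k.+1 + x k.

Definition eventual_period (x : nat -> int) (m t : nat) : Prop :=
  exists N : nat, forall k : nat, (N <= k)%N -> (x (k + t)%N == x k %[mod m%:Z])%Z.

Definition tau_eq (x : nat -> int) (m t : nat) : Prop :=
  (1 <= t)%N /\ eventual_period x m t /\
  forall t' : nat, (1 <= t')%N -> (t' < t)%N -> ~ eventual_period x m t'.

From mathcomp Require Import all_boot all_order all_algebra all_field.
From mathcomp Require Import ring zify.
Import Order.TTheory GRing.Theory Num.Theory.
Local Open Scope ring_scope.
Set Implicit Arguments. Unset Strict Implicit. Unset Printing Implicit Defensive.

(* Let U, V be the Lucas sequences of f, m := p^v, h := n/2, and for y in L(f)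
   put y* := 2 y_(k+1) - a1 y_k. The identities
     y*_(i+2j) - (-1)^j y*_i = D U_j y_(i+j),   y*_(i+2j) + (-1)^j y*_i = V_j y*_(i+j)
   show that y* has period 2n mod m (as m | U_n = a1 l_n), and that y*_s = y*_t mod m
   with 0 < t - s = 2j < 2n would force m | y_(s+j) or m | y*_(s+j), because a1 l_j is
   U_j or V_j and p is a primitive divisor prime to a1 D. An odd eventual period
   t < 2n would make 2 (t mod n) an even one, so tau(y*; m) = 2n, and x := y* works as
   soon as neither y nor y* ever vanishes mod m. Such a y exists by counting: since
   U_n = U_h V_h, m divides U_h (h odd) or V_h (h even); this reduces non-vanishing to
   fewer than m linear forms in (y_0, y_1), each with a unit coefficient and hence
   vanishing on at most m of the m^2 seeds. *)

Lemma nat_ind2 (P : nat -> Prop) :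
  P 0%N -> P 1%N -> (forall k, P k -> P k.+1 -> P k.+2) -> forall k, P k.
Proof.
move=> P0 P1 IH k; suff: P k /\ P k.+1 by case.
by elim: k => [|k [Pk Pk1]]; split=> //; apply: IH.
Qed.

Section LinearRecurrence.
Variable a : nat.

Fixpoint lin_rec_pair (y0 y1 : int) (k : nat) : int * int :=
  if k is k'.+1 then
    let y := lin_rec_pair y0 y1 k' in (y.2, a%:Z * y.2 + y.1)
  else (y0, y1).

Definition lin_rec y0 y1 k := (lin_rec_pair y0 y1 k).1.

Lemma lin_rec_in_L y0 y1 : in_L a (lin_rec y0 y1).
Proof. by []. Qed.

Definition lucasU := lin_rec 0 1.
Definition lucasV := lin_rec 2 a%:Z.
(* [lucasW k = lucasU k.-1] for [k > 0]. *)
Definition lucasW := lin_rec 1 0.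

Lemma in_L_addE (z : nat -> int) : in_L a z ->
  forall s j, z (s + j)%N = lucasU j * z s.+1 + lucasW j * z s.
Proof.
move=> zL s; apply: nat_ind2 => [||k IH0 IH1].
- by rewrite addn0 /= mul0r add0r mul1r.
- by rewrite addn1 /= mul1r mul0r addr0.
rewrite !addnS zL -addnS IH0 IH1 /lucasU /lucasW !lin_rec_in_L; ring.
Qed.

Lemma lin_recE y0 y1 k : lin_rec y0 y1 k = lucasW k * y0 + lucasU k * y1.
Proof. by rewrite -[k]add0n in_L_addE // addrC. Qed.

Lemma in_L_cassini (y z : nat -> int) : in_L a y -> in_L a z -> forall k,
  y k.+1 * z k - y k * z k.+1 = (-1) ^+ k * (y 1%N * z 0%N - y 0%N * z 1%N).
Proof.
move=> yL zL; elim=> [|k IH]; first by rewrite expr0 mul1r.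
by rewrite yL zL exprS -mulrA -IH; ring.
Qed.

Lemma in_L_dvdz_wronskian (y z : nat -> int) (d : int) k : in_L a y -> in_L a z ->
  (d %| y k)%Z -> (d %| z k)%Z -> (d %| y 1%N * z 0%N - y 0%N * z 1%N)%Z.
Proof.
move=> yL zL dy dz.
have -> : y 1%N * z 0%N - y 0%N * z 1%N
    = (-1) ^+ k * (y k.+1 * z k - y k * z k.+1).
  by rewrite (in_L_cassini yL zL k) mulrA -expr2 sqrr_sign mul1r.
by apply/dvdz_mull/rpredB; [exact: dvdz_mull | exact: dvdz_mulr].
Qed.

(* In Binet form [c alpha^k + d beta^k], this is [sqrt D (c alpha^k - d beta^k)]. *)
Definition conj_seq (z : nat -> int) k := 2 * z k.+1 - a%:Z * z k.

Lemma conj_seq_in_L z : in_L a z -> in_L a (conj_seq z).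
Proof. by move=> zL k; rewrite /conj_seq !zL; ring. Qed.

Lemma conj_lin_recE y0 y1 k :
  conj_seq (lin_rec y0 y1) k = conj_seq lucasW k * y0 + conj_seq lucasU k * y1.
Proof. by rewrite /conj_seq !lin_recE; ring. Qed.

Lemma dvdz_lucasWU d k : (d %| lucasW k)%Z -> (d %| lucasU k)%Z -> (d %| 1)%Z.
Proof.
by move=> dW dU; have := in_L_dvdz_wronskian (lin_rec_in_L 0 1) (lin_rec_in_L 1 0) dU dW.
Qed.

Lemma dvdz_conj_lucasWU d k : (d %| conj_seq lucasW k)%Z -> (d %| conj_seq lucasU k)%Z ->
  (d %| (discr a)%:Z)%Z.
Proof.
move=> dW dU.
have := in_L_dvdz_wronskian (conj_seq_in_L (lin_rec_in_L 0 1))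
  (conj_seq_in_L (lin_rec_in_L 1 0)) dU dW.
by rewrite /conj_seq /lin_rec /= /discr PoszD PoszM -rpredN; congr (_ %| _)%Z; ring.
Qed.

End LinearRecurrence.

Section Binet.
Variable a : nat.
Let s : algC := sqrtC (discr a)%:R.
Let al := alpha a.
Let be := beta a.

Lemma sqrt_discr_sqr : s ^+ 2 = a%:R ^+ 2 + 4%:R.
Proof. by rewrite /s sqrtCK /discr natrD natrX. Qed.

Lemma sqrt_discr_neq0 : s != 0.
Proof. by rewrite sqrtC_eq0 pnatr_eq0 /discr addn4. Qed.

Let alphaE : al = (a%:R + s) / 2. Proof. by []. Qed.
Let betaE : be = (a%:R - s) / 2. Proof. by []. Qed.

Lemma alpha_mul_beta : al * be = -1.
Proof.
have -> : al * be = (a%:R ^+ 2 - s ^+ 2) / 4%:R by rewrite alphaE betaE; field.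
by rewrite sqrt_discr_sqr; field.
Qed.

Lemma alpha_sqr : al ^+ 2 = a%:R * al + 1.
Proof.
apply/eqP; rewrite -subr_eq0; apply/eqP.
have -> : al ^+ 2 - (a%:R * al + 1) = (s ^+ 2 - a%:R ^+ 2 - 4%:R) / 4%:R.
  by rewrite alphaE; field.
by rewrite sqrt_discr_sqr; field.
Qed.

Lemma beta_sqr : be ^+ 2 = a%:R * be + 1.
Proof.
apply/eqP; rewrite -subr_eq0; apply/eqP.
have -> : be ^+ 2 - (a%:R * be + 1) = (s ^+ 2 - a%:R ^+ 2 - 4%:R) / 4%:R.
  by rewrite betaE; field.
by rewrite sqrt_discr_sqr; field.
Qed.

Lemma in_L_binet (y : nat -> int) (c d : algC) : in_L a y ->
  (y 0%N)%:~R = c + d -> (y 1%N)%:~R = c * al + d * be ->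
  forall k, (y k)%:~R = c * al ^+ k + d * be ^+ k.
Proof.
move=> yL y0E y1E; apply: nat_ind2 => [||k IH0 IH1].
- by rewrite y0E !expr0 !mulr1.
- by rewrite y1E !expr1.
rewrite yL intrD intrM IH0 IH1 -[k.+2]add2n !exprD alpha_sqr beta_sqr !exprS /=.
ring.
Qed.

Lemma in_L_binet_exists (y : nat -> int) : in_L a y ->
  exists c d : algC, forall k, (y k)%:~R = c * al ^+ k + d * be ^+ k.
Proof.
move=> yL; have sn := sqrt_discr_neq0.
exists (((y 1%N)%:~R - be * (y 0%N)%:~R) / s), ((al * (y 0%N)%:~R - (y 1%N)%:~R) / s).
by apply: in_L_binet; rewrite // alphaE betaE; field.
Qed.

Lemma lucasU_binet k : (lucasU a k)%:~R = (al ^+ k - be ^+ k) / s.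
Proof.
have sn := sqrt_discr_neq0.
rewrite (in_L_binet (c := s^-1) (d := - s^-1) (lin_rec_in_L a 0 1)) /lin_rec /=.
- by field.
- by rewrite subrr.
- by rewrite alphaE betaE; field.
Qed.

Lemma lucasV_binet k : (lucasV a k)%:~R = al ^+ k + be ^+ k.
Proof.
rewrite (in_L_binet (c := 1) (d := 1) (lin_rec_in_L a 2 a)) ?mul1r //.
by rewrite /lin_rec /= alphaE betaE; field.
Qed.

Lemma sign_alpha_beta j : (-1) ^+ j = al ^+ j * be ^+ j.
Proof. by rewrite -exprMn alpha_mul_beta. Qed.

Lemma in_L_add_shift2 (z : nat -> int) : in_L a z -> forall i j,
  z (i + 2 * j)%N + (-1) ^+ j * z i = lucasV a j * z (i + j)%N.
Proof.
move=> zL i j; apply/eqP; rewrite -(eqr_int algC).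
have [c [d zE]] := in_L_binet_exists zL.
rewrite !intrD !intrM lucasV_binet !zE intr_sign sign_alpha_beta.
by rewrite mul2n -addnn !exprD; apply/eqP; ring.
Qed.

Lemma conj_sub_shift2 (y : nat -> int) : in_L a y -> forall i j,
  conj_seq a y (i + 2 * j)%N - (-1) ^+ j * conj_seq a y i
    = (discr a)%:Z * lucasU a j * y (i + j)%N.
Proof.
move=> yL i j; apply/eqP; rewrite -(eqr_int algC) /conj_seq.
have [c [d yE]] := in_L_binet_exists yL.
rewrite ?(intrD, intrM, intrN) lucasU_binet !yE intr_sign.
have -> : ((discr a)%:Z)%:~R = s ^+ 2 :> algC by rewrite sqrtCK.
rewrite sign_alpha_beta; have sn := sqrt_discr_neq0.
by rewrite mul2n -addnn !exprS !exprD alphaE betaE; apply/eqP; field.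
Qed.

Lemma lucasU_double h : lucasU a (h + h)%N = lucasU a h * lucasV a h.
Proof.
apply/eqP; rewrite -(eqr_int algC) intrM lucasV_binet !lucasU_binet !exprD.
by have sn := sqrt_discr_neq0; apply/eqP; field.
Qed.
End Binet.

Section Lehmer.
Variable a : nat.
Hypothesis a_gt0 : (0 < a)%N.

Let a_neq0 : (a%:R : algC) != 0. Proof. by rewrite pnatr_eq0 -lt0n. Qed.

Lemma dvdz_lucasU_even_lucasV_odd k :
  (a%:Z %| lucasU a k.*2)%Z /\ (a%:Z %| lucasV a k.*2.+1)%Z.
Proof.
elim: k => [|k [dU dV]]; first by split; rewrite //= dvdzz.
by rewrite doubleS /lucasU /lucasV !lin_rec_in_L; split; apply: rpredD => //;
  apply: dvdz_mulr; apply: dvdzz.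
Qed.

Lemma lehmerC_even k : ~~ odd k -> lehmerC a k = (lucasU a k)%:~R / a%:R.
Proof.
move=> ek; rewrite /lehmerC (negbTE ek) exprNn -signr_odd (negbTE ek) expr0 mul1r.
rewrite lucasU_binet; have sn := sqrt_discr_neq0 a.
have -> : alpha a ^+ 2 - beta a ^+ 2 = sqrtC (discr a)%:R * a%:R.
  by rewrite /alpha /beta; field.
by rewrite invfM mulrA.
Qed.

Lemma lehmerC_odd k : odd k -> lehmerC a k = (lucasV a k)%:~R / a%:R.
Proof.
move=> ok; rewrite /lehmerC ok exprNn -signr_odd ok expr1 lucasV_binet.
have -> : alpha a + beta a = a%:R by rewrite /alpha /beta; field.
by rewrite mulN1r opprK.
Qed.

Lemma mul_ell k : a%:Z * ell a k = if odd k then lucasV a k else lucasU a k.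
Proof.
have [dU dV] := dvdz_lucasU_even_lucasV_odd k./2.
rewrite /ell; case: ifP => ok.
- have {}dV : (a%:Z %| lucasV a k)%Z by rewrite -(odd_double_half k) ok add1n.
  by rewrite lehmerC_odd // -(divzK dV) intrM mulfK // intrKfloor mulrC divzK.
- have {}dU : (a%:Z %| lucasU a k)%Z by rewrite -(odd_double_half k) ok add0n.
  by rewrite lehmerC_even ?ok // -(divzK dU) intrM mulfK // intrKfloor mulrC divzK.
Qed.
End Lehmer.

Section AvoidingLinearForms.
Variable m : nat.
Hypothesis m_gt0 : (0 < m)%N.

Definition form_zeros (f : int * int) : {set 'I_m * 'I_m} :=
  [set y : 'I_m * 'I_m | (m%:Z %| f.1 * (y.1 : nat)%:Z + f.2 * (y.2 : nat)%:Z)%Z].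

Lemma ord_eq_of_dvdz (c : int) (x y : 'I_m) : coprimez m%:Z c ->
  (m%:Z %| c * ((x : nat)%:Z - (y : nat)%:Z))%Z -> x = y.
Proof.
move=> cm; rewrite Gauss_dvdzr // -eqz_mod_dvd !modz_nat !modn_small // => /eqP[xy].
exact: val_inj.
Qed.

Lemma card_form_zeros f : coprimez m%:Z f.1 || coprimez m%:Z f.2 ->
  (#|form_zeros f| <= m)%N.
Proof.
have card_le (g : 'I_m * 'I_m -> 'I_m) : {in form_zeros f &, injective g} ->
    (#|form_zeros f| <= m)%N.
  by move/card_in_imset <-; rewrite -[m in (_ <= m)%N]card_ord max_card.
case/orP=> cf; [apply: (card_le snd) | apply: (card_le fst)];
  move=> [x1 x2] [y1 y2]; rewrite !inE /= => zx zy eq_y; rewrite eq_y in zx *;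
  congr (_, _); apply: (ord_eq_of_dvdz cf); move: (rpredB zx zy).
- by rewrite opprD addrACA subrr addr0 -mulrBr.
- by rewrite opprD addrACA subrr add0r -mulrBr.
Qed.

Lemma card_bigcup_form_zeros fs :
  (forall f, f \in fs -> coprimez m%:Z f.1 || coprimez m%:Z f.2) ->
  (#|\bigcup_(f <- fs) form_zeros f| <= size fs * m)%N.
Proof.
elim: fs => [|f fs IH] cop_fs; first by rewrite big_nil cards0.
rewrite big_cons mulSn (leq_trans (leq_card_setU _ _)) // leq_add //.
  by rewrite card_form_zeros // cop_fs ?mem_head.
by rewrite IH // => g fs_g; rewrite cop_fs // inE fs_g orbT.
Qed.

Lemma exists_avoiding_forms fs :
  (forall f, f \in fs -> coprimez m%:Z f.1 || coprimez m%:Z f.2) -> (size fs < m)%N ->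
  exists y0 y1 : nat, forall f, f \in fs -> ~~ (m%:Z %| f.1 * y0%:Z + f.2 * y1%:Z)%Z.
Proof.
move=> cop_fs small_fs.
have [[y0 y1] /= avoid|all_bad] := pickP [predC \bigcup_(f <- fs) form_zeros f].
  exists y0, y1 => f fs_f; apply/negP => zf; move/negP: avoid; apply.
  by rewrite (big_rem f fs_f) inE; apply/orP; left; rewrite inE.
have : (#|[set: 'I_m * 'I_m]| <= size fs * m)%N.
  apply: leq_trans (card_bigcup_form_zeros cop_fs).
  by apply/subset_leq_card/subsetP => y _; move/negbFE: (all_bad y).
by rewrite cardsT card_prod card_ord leq_pmul2r // leqNgt small_fs.
Qed.
End AvoidingLinearForms.

Section PrimePower.
Variables (a p v : nat).
Hypothesis p_prime : prime p.
Local Notation m := (p ^ v)%N.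

Lemma coprimez_pexp (x : int) : ~~ (p%:Z %| x)%Z -> coprimez m%:Z x.
Proof. by rewrite coprimezE absz_nat => px; rewrite coprimeXl // prime_coprime. Qed.

Lemma dvdz_pexp : (0 < v)%N -> (p%:Z %| m%:Z)%Z.
Proof. by move=> v_gt0; rewrite dvdzE !absz_nat /m -{1}(expn1 p) dvdn_exp2l. Qed.

Lemma prime_ndvdz1 : ~~ (p%:Z %| 1)%Z.
Proof. by rewrite dvdzE absz_nat dvdn1; case: p p_prime => [|[|]]. Qed.

Lemma dvdz_lucasU_ndvdz_lucasW k : (p%:Z %| lucasU a k)%Z -> ~~ (p%:Z %| lucasW a k)%Z.
Proof. by move=> pU; apply/negP => pW; case/negP: prime_ndvdz1; exact: dvdz_lucasWU pW pU. Qed.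

Lemma coprimez_lucas_form k : coprimez m%:Z (lucasW a k) || coprimez m%:Z (lucasU a k).
Proof.
have [pU|pU] := boolP (p%:Z %| lucasU a k)%Z; apply/orP; [left|right].
  exact/coprimez_pexp/dvdz_lucasU_ndvdz_lucasW.
exact: coprimez_pexp.
Qed.

Lemma coprimez_conj_lucas_form k : ~~ (p%:Z %| (discr a)%:Z)%Z ->
  coprimez m%:Z (conj_seq a (lucasW a) k) || coprimez m%:Z (conj_seq a (lucasU a) k).
Proof.
move=> pD; have [pU|pU] := boolP (p%:Z %| conj_seq a (lucasU a) k)%Z;
  apply/orP; [left|right]; apply: coprimez_pexp; last exact: pU.
by apply: contra pD => pW; exact: dvdz_conj_lucasWU pW pU.
Qed.

Lemma in_L_dvdz_addn (z : nat -> int) t r : in_L a z ->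
  (m%:Z %| lucasU a t)%Z -> ~~ (p%:Z %| lucasW a t)%Z ->
  (m%:Z %| z (r + t)%N)%Z = (m%:Z %| z r)%Z.
Proof.
move=> zL mU pW; rewrite (in_L_addE zL) rpredDl; last exact: dvdz_mulr.
by rewrite Gauss_dvdzr // coprimez_pexp.
Qed.

Lemma in_L_ndvdz (z : nat -> int) t : in_L a z -> (0 < t)%N ->
  (m%:Z %| lucasU a t)%Z -> ~~ (p%:Z %| lucasW a t)%Z ->
  (forall k, (k < t)%N -> ~~ (m%:Z %| z k)%Z) -> forall k, ~~ (m%:Z %| z k)%Z.
Proof.
move=> zL t_gt0 mU pW z_small; elim/ltn_ind=> k IH.
have [/z_small //|tk] := ltnP k t.
by rewrite -(subnK tk) in_L_dvdz_addn // IH // ltn_subrL t_gt0 (leq_trans t_gt0 tk).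
Qed.
End PrimePower.

Section Periodicity.
Variables (x : nat -> int) (m : nat).

Definition periodic_mod t := forall k, (x (k + t)%N == x k %[mod m%:Z])%Z.

Lemma periodic_mod_mul q t : periodic_mod t -> periodic_mod (q * t).
Proof.
move=> xt k; elim: q => [|q IH]; first by rewrite mul0n addn0.
by rewrite mulSnr addnA (eqP (xt (k + q * t)%N)).
Qed.

Lemma eventual_period_periodic T t : (0 < T)%N -> periodic_mod T ->
  eventual_period x m t -> periodic_mod t.
Proof.
move=> T_gt0 xT [N xt] k.
have shift j : (x (j + N * T)%N %% m%:Z)%Z = (x j %% m%:Z)%Z.
  exact/eqP/periodic_mod_mul.
apply/eqP; rewrite -shift -[RHS]shift addnAC; apply/eqP/xt.
by rewrite (leq_trans (leq_pmulr N T_gt0)) ?leq_addl.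
Qed.

Lemma periodic_mod_modn T t : periodic_mod T -> periodic_mod t -> periodic_mod (t %% T).
Proof.
move=> xT xt k.
rewrite -(eqP (periodic_mod_mul (t %/ T) xT _)) -addnA [(t %% T + _)%N]addnC -divn_eq.
exact: xt.
Qed.
End Periodicity.

Section Construction.
Variables (a n p v : nat).
Hypothesis p_prime : prime p.
Hypothesis n_gt0 : (0 < n)%N.
Hypothesis n_even : ~~ odd n.
Hypothesis n_lt_pv : (n < p ^ v)%N.
Hypothesis pv_dvd_lucasU : ((p ^ v)%:Z %| lucasU a n)%Z.
Hypothesis p_ndvd_discr : ~~ (p%:Z %| (discr a)%:Z)%Z.
Hypothesis p_ndvd_lucas :
  forall j, (0 < j < n)%N -> ~~ (p%:Z %| if odd j then lucasV a j else lucasU a j)%Z.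
Local Notation m := (p ^ v)%N.
Let h := n./2.

Let v_gt0 : (0 < v)%N.
Proof. by case: v n_lt_pv => //; rewrite expn0 ltnS leqNgt n_gt0. Qed.

Let m_gt0 : (0 < m)%N.
Proof. by rewrite expn_gt0 prime_gt0. Qed.

Let n_half : n = (h + h)%N.
Proof. by rewrite addnn /h -[in LHS](odd_double_half n) (negbTE n_even). Qed.

Let h_bounds : (0 < h < n)%N.
Proof. by move: n_half n_gt0; lia. Qed.

Lemma dvdz_lucas_half : if odd h then (m%:Z %| lucasU a h)%Z else (m%:Z %| lucasV a h)%Z.
Proof.
move: pv_dvd_lucasU; rewrite n_half lucasU_double.
have := p_ndvd_lucas h_bounds; case: ifP => _ ph.
- by rewrite Gauss_dvdzl // coprimez_pexp.
- by rewrite Gauss_dvdzr // coprimez_pexp.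
Qed.

Lemma exists_avoiding_lin_rec ts tc : (ts + tc < m)%N -> exists y0 y1 : int,
  (forall k, (k < ts)%N -> ~~ (m%:Z %| lin_rec a y0 y1 k)%Z) /\
  (forall k, (k < tc)%N -> ~~ (m%:Z %| conj_seq a (lin_rec a y0 y1) k)%Z).
Proof.
move=> small.
pose fs := [seq (lucasW a k, lucasU a k) | k <- iota 0 ts] ++
  [seq (conj_seq a (lucasW a) k, conj_seq a (lucasU a) k) | k <- iota 0 tc].
have cop_fs f : f \in fs -> coprimez m%:Z f.1 || coprimez m%:Z f.2.
  rewrite mem_cat => /orP[] /mapP[k _ ->].
  - exact: coprimez_lucas_form.
  - exact: coprimez_conj_lucas_form.
have [|y0 [y1 avoid]] := exists_avoiding_forms m_gt0 cop_fs.
  by rewrite size_cat !size_map !size_iota.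
exists y0%:Z, y1%:Z; split=> k k_lt.
- rewrite lin_recE; apply: (avoid (_, _)).
  by rewrite mem_cat map_f ?mem_iota.
- rewrite conj_lin_recE; apply: (avoid (_, _)).
  by rewrite mem_cat map_f ?orbT ?mem_iota.
Qed.

Lemma conj_ndvdz_of_half_even (y : nat -> int) : in_L a y -> ~~ odd h ->
  (m%:Z %| lucasV a h)%Z -> (forall k, ~~ (m%:Z %| y k)%Z) ->
  forall k, ~~ (m%:Z %| conj_seq a y k)%Z.
Proof.
move=> yL h_even mV y_ndvd k; apply/negP => mX.
have := conj_sub_shift2 yL k h; have := in_L_add_shift2 (conj_seq_in_L yL) k h.
rewrite -signr_odd (negbTE h_even) expr0 !mul1r => add_id sub_id.
have mX2 : (m%:Z %| conj_seq a y (k + 2 * h)%N)%Z.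
  by rewrite -(addrK (conj_seq a y k) (conj_seq a y _)) add_id rpredB // dvdz_mulr.
case/negP: (y_ndvd (k + h)%N).
have pU : ~~ (p%:Z %| lucasU a h)%Z.
  by have := p_ndvd_lucas h_bounds; rewrite (negbTE h_even).
rewrite -(Gauss_dvdzr _ (coprimez_pexp v p_prime pU)).
by rewrite -(Gauss_dvdzr _ (coprimez_pexp v p_prime p_ndvd_discr)) mulrA -sub_id rpredB.
Qed.

Lemma exists_avoiding_seed : exists y0 y1 : int, forall k,
  ~~ (m%:Z %| lin_rec a y0 y1 k)%Z /\ ~~ (m%:Z %| conj_seq a (lin_rec a y0 y1) k)%Z.
Proof.
have /andP[h_gt0 h_lt] := h_bounds.
have := dvdz_lucas_half; case: ifP => h_odd mUV.
  have [|y0 [y1 [Y_small X_small]]] := exists_avoiding_lin_rec (ts := h) (tc := h).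
    by rewrite -n_half.
  have pW := dvdz_lucasU_ndvdz_lucasW p_prime (dvdz_trans (dvdz_pexp p v_gt0) mUV).
  exists y0, y1 => k; split.
  - exact: (in_L_ndvdz p_prime (lin_rec_in_L a y0 y1) h_gt0 mUV pW Y_small).
  - exact: (in_L_ndvdz p_prime (conj_seq_in_L (lin_rec_in_L a y0 y1)) h_gt0 mUV pW X_small).
have [|y0 [y1 [Y_small _]]] := exists_avoiding_lin_rec (ts := n) (tc := 0).
  by rewrite addn0.
have pW := dvdz_lucasU_ndvdz_lucasW p_prime
  (dvdz_trans (dvdz_pexp p v_gt0) pv_dvd_lucasU).
have Y_ndvd := in_L_ndvdz p_prime (lin_rec_in_L a y0 y1) n_gt0 pv_dvd_lucasU pW Y_small.
exists y0, y1 => k; split; first exact: Y_ndvd.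
by apply: conj_ndvdz_of_half_even; rewrite ?h_odd.
Qed.

Section ConjugateSequence.
Variable y : nat -> int.
Hypothesis y_in_L : in_L a y.
Hypothesis y_ndvd : forall k, ~~ (m%:Z %| y k)%Z.
Hypothesis conj_ndvd : forall k, ~~ (m%:Z %| conj_seq a y k)%Z.
Local Notation x := (conj_seq a y).

Lemma conj_periodic : periodic_mod x m (2 * n).
Proof.
move=> k; have := conj_sub_shift2 y_in_L k n.
rewrite -signr_odd (negbTE n_even) expr0 mul1r eqz_mod_dvd => ->.
by rewrite dvdz_mulr // dvdz_mull.
Qed.

Lemma conj_neq_same_parity s t : (s < t)%N -> (t < 2 * n)%N -> odd s = odd t ->
  ~~ (x s == x t %[mod m%:Z])%Z.
Proof.
move=> st t_lt parity; set j := (t - s)./2.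
have t_def : t = (s + 2 * j)%N.
  have j_even : ~~ odd (t - s) by rewrite oddB ?(ltnW st) // parity addbb.
  rewrite mul2n /j -[in LHS](subnKC (ltnW st)) -[in LHS](odd_double_half (t - s)).
  by rewrite (negbTE j_even) add0n.
have /p_ndvd_lucas : (0 < j < n)%N by move: t_def st t_lt; lia.
rewrite eq_sym eqz_mod_dvd t_def; case: ifP => j_odd pj; apply/negP => mx.
- have := in_L_add_shift2 (conj_seq_in_L y_in_L) s j.
  rewrite -signr_odd j_odd expr1 mulN1r => add_id.
  case/negP: (conj_ndvd (s + j)%N).
  by rewrite -(Gauss_dvdzr _ (coprimez_pexp v p_prime pj)) -add_id.
- have := conj_sub_shift2 y_in_L s j; rewrite -signr_odd j_odd expr0 mul1r => sub_id.
  case/negP: (y_ndvd (s + j)%N).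
  rewrite -(Gauss_dvdzr _ (coprimez_pexp v p_prime pj)).
  by rewrite -(Gauss_dvdzr _ (coprimez_pexp v p_prime p_ndvd_discr)) mulrA -sub_id.
Qed.

Lemma conj_tau : tau_eq x m (2 * n).
Proof.
have n2_gt0 : (0 < 2 * n)%N by rewrite muln_gt0.
split=> //; split; first by exists 0%N => k _; apply: conj_periodic.
move=> t t_gt0 t_lt /(eventual_period_periodic n2_gt0 conj_periodic) xt.
have [e [e_even /andP[e_gt0 e_lt] xe]] :
    exists e, [/\ ~~ odd e, (0 < e < 2 * n)%N & periodic_mod x m e].
  have [t_odd|t_even] := boolP (odd t); last by exists t; split; rewrite ?t_gt0 ?t_lt.
  have n_ndvd_t : ~~ (n %| t)%N.
    by apply: contraL t_odd => /dvdnP[q ->]; rewrite oddM negb_and n_even orbT.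
  exists (2 * (t %% n))%N; split.
  - by rewrite oddM.
  - by rewrite muln_gt0 ltn_pmul2l // ltn_mod n_gt0 andbT /= lt0n.
  - by rewrite muln_modr; apply: periodic_mod_modn conj_periodic (periodic_mod_mul 2 xt).
have e_succ_lt : (e.+1 < 2 * n)%N.
  rewrite ltn_neqAle e_lt andbT; apply/eqP => e_succ.
  by move: (congr1 odd e_succ); rewrite /= oddM (negbTE e_even).
have parity : odd 1 = odd e.+1 by rewrite /= e_even.
case/negP: (conj_neq_same_parity (e_gt0 : (1 < e.+1)%N) e_succ_lt parity).
by rewrite eq_sym -add1n; apply: xe.
Qed.
End ConjugateSequence.

Lemma exists_sequence : exists x : nat -> int,
  [/\ in_L a x, tau_eq x m (2 * n),
      (forall s t : nat, (0 < s)%N -> (s < t)%N -> (t < 2 * n)%N ->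
         odd s = odd t -> ~~ (x s == x t %[mod m%:Z])%Z)
    & (forall j : nat, ~~ (m%:Z %| x j)%Z)].
Proof.
have [y0 [y1 /all_and2[Y_ndvd X_ndvd]]] := exists_avoiding_seed.
have YL := lin_rec_in_L a y0 y1.
exists (conj_seq a (lin_rec a y0 y1)); split.
- exact: conj_seq_in_L.
- exact: conj_tau.
- by move=> s t _; apply: conj_neq_same_parity.
- exact: X_ndvd.
Qed.
End Construction.

Lemma dvdz_prod_index_iota (F : nat -> int) m n j :
  (m <= j < n)%N -> (F j %| \prod_(m <= i < n) F i)%Z.
Proof. by move=> j_in; rewrite (bigD1_seq j) ?mem_index_iota ?iota_uniq //= dvdz_mulr. Qed.

Lemma primitive_divisor_ndvdz a n p : primitive_divisor a n p ->
  [/\ ~~ (p%:Z %| a%:Z)%Z, ~~ (p%:Z %| (discr a)%:Z)%Z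
    & forall j, (0 < j < n)%N -> ~~ (p%:Z %| ell a j)%Z].
Proof.
case=> _ [_ p_ndvd]; split.
- apply: contra p_ndvd => pa; apply: dvdz_mulr.
  by rewrite dvdzE !absz_nat expnS -mulnA dvdn_mulr.
- apply: contra p_ndvd => pD; apply: dvdz_mulr.
  by rewrite dvdzE !absz_nat dvdn_mull.
- move=> j j_in; apply: contra p_ndvd => pj; apply: dvdz_mull.
  exact: dvdz_trans pj (dvdz_prod_index_iota _ j_in).
Qed.

Theorem mainTheorem14 (a1 n p : nat) :
  (1 <= a1)%N -> (4 <= n)%N -> ~~ odd n ->
  high_primitive_divisor a1 n p ->
  legendre (discr a1)%:Z p = -1 ->
  let v := nu p (ell a1 n) in
  exists x : nat -> int,
    [/\ in_L a1 x,
        tau_eq x (p ^ v) (2 * n),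
        (forall s t : nat, (0 < s)%N -> (s < t)%N -> (t < 2 * n)%N ->
           odd s = odd t -> ~~ (x s == x t %[mod (p ^ v)%:Z])%Z)
      & (forall j : nat, ~~ ((p ^ v)%:Z %| x j)%Z)].
Proof.
move=> a1_gt0 n_ge4 n_even [pdiv [_ n_lt_pv]] _ v.
have [p_prime _] := pdiv.
have [p_ndvd_a1 p_ndvd_discr p_ndvd_ell] := primitive_divisor_ndvdz pdiv.
have n_gt0 : (0 < n)%N by rewrite (leq_trans _ n_ge4).
have pv_dvd_lucasU : ((p ^ v)%:Z %| lucasU a1 n)%Z.
  have := mul_ell a1_gt0 n; rewrite (negbTE n_even) => <-.
  by rewrite dvdz_mull // dvdzE absz_nat pfactor_dvdnn.
have p_ndvd_lucas j : (0 < j < n)%N ->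
    ~~ (p%:Z %| if odd j then lucasV a1 j else lucasU a1 j)%Z.
  move=> j_in; rewrite -(mul_ell a1_gt0 j).
  by rewrite (Gauss_dvdzr _ (coprimez_pexp 1 p_prime p_ndvd_a1)) p_ndvd_ell.
exact: exists_sequence p_prime n_gt0 n_even n_lt_pv pv_dvd_lucasU p_ndvd_discr p_ndvd_lucas.
Qed.
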